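(* Let $(G,\mathcal{C})$ be CER with respect to the ordering $(V_{\eta_1},\dots,V_{\eta_r})$, with $2$-path function $m$ computed for this ordering. Then: (1) for every $k\in F$, $\mathrm{BlockDiag}(J^k)=J^k=\mathrm{BlockTri}(J^k)$; (2) for every $k\in[r+R]\setminus F$, $\mathrm{BlockDiag}(J^k)=0$; (3) for all $k,h\in F$ and all $\{v,w\}\in\tilde E$, $[J^kJ^h]_{vw}=m_{v\to w}(k,h)$; (4) if moreover (M2) holds, then for every $i\in[r]$ and all $k,h\in F_i$, $J^kJ^h=J^hJ^k$.
   Context: $G=(V,E)$ finite simple undirected graph, $V=[p]$; coloring: vertex color classes $V_1,\dots,V_r$, edge color classes $E_{r+1},\dots,E_{r+R}$ partitioning $E$. $\tilde E=E\cup\{\{v\}:v\in V\}$, $E_i=\{\{v\}:v\in V_i\}$; $c(v,w)=k$ iff $\{v,w\}\in E_k$, $c(v)=c(v,v)$, $c(v,w)=0$ for non-adjacent distinct $v,w$. $J^k\in\{0,1\}^{p\times p}$ with $J^k_{vw}=1$ iff $c(v,w)=k$. $\pi(v)=i$ iff $v\in V_{\eta_i}$; $V_{\le i}=V_{\eta_1}\cup\dots\cup V_{\eta_i}$. For a $p\times p$ matrix $Y$: $\mathrm{BlockTri}(Y)_{vu}=Y_{vu}$ if $\pi(u)\le\pi(v)$ and $0$ otherwise; $\mathrm{BlockDiag}(Y)_{vu}=Y_{vu}$ if $c(v)=c(u)$ and $0$ otherwise. $m_{v\to w}(k,h)=|\{u\in V_{\le\min(\pi(v),\pi(w))}: c(v,u)=k,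 c(u,w)=h\}|$, $m_{v\leftrightarrow w}(k,h)=m_{v\to w}(k,h)+m_{v\to w}(h,k)$. $F_i=\{c(v,w):\{v,w\}\in\tilde E,\ c(v)=c(w)=i\}$, $F=\bigcup_iF_i$. cpeo: every $v\in V_{\eta_i}$ is simplicial (neighbours form a clique) in $G[V_{\eta_i}\cup\dots\cup V_{\eta_r}]$. (M1): $c(v,w)=c(v',w')$ implies $m_{v\leftrightarrow w}=m_{v'\leftrightarrow w'}$. (M2): $c(v)=c(w)$ implies $m_{v\to w}(k,h)=m_{w\to v}(k,h)$ for all $k,h\in F$. CER with respect to the ordering: it is a cpeo and (M1) holds. *)

From HB Require Import structures.
From mathcomp Require Import all_boot all_order all_algebra.
Set Implicit Arguments. Unset Strict Implicit. Unset Printing Implicit Defensive.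
Import GRing.Theory.

(* Colored graphs on V = 'I_p (i.e. [p]), vertex colors 1..r, edge colors
   r+1..r+R, color 0 for non-adjacent distinct pairs. *)
Section ColoredGraph.
Variables (p r R : nat) (adj : rel 'I_p) (vcol : 'I_p -> nat)
          (ecol : 'I_p -> 'I_p -> nat) (eta : nat -> nat).

Definition colored_graph : Prop :=
  [/\ (forall v w, adj v w = adj w v), (forall v, ~~ adj v v),
      (forall v, 1 <= vcol v <= r),
      (forall v w, ecol v w = ecol w v) &
      (forall v w, adj v w -> r < ecol v w <= r + R)].

(* eta is an ordering (V_{eta_1},...,V_{eta_r}) of the vertex color classes *)
Definition ordering : Prop :=
  (forall i, 1 <= i <= r -> 1 <= eta i <= r) /\
  {in [pred i | 1 <= i <= r] &, injective eta}.

Definition col (v w : 'I_p) : nat :=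
  if v == w then vcol v else if adj v w then ecol v w else 0.

Definition inEt (v w : 'I_p) : bool := (v == w) || adj v w.

Definition Jm (k : nat) : 'M[int]_p := \matrix_(v, w) ((col v w == k) : int).

(* pi(v) = i iff v in V_{eta_i} *)
Definition piv (v : 'I_p) : nat := (index (vcol v) (map eta (iota 1 r))).+1.

Definition BlockTri (Y : 'M[int]_p) : 'M[int]_p :=
  \matrix_(v, u) (if piv u <= piv v then Y v u else 0).
Definition BlockDiag (Y : 'M[int]_p) : 'M[int]_p :=
  \matrix_(v, u) (if vcol v == vcol u then Y v u else 0).

Definition m2 (v w : 'I_p) (k h : nat) : nat :=
  #|[set u : 'I_p | (piv u <= minn (piv v) (piv w)) && (col v u == k) && (col u w == h)]|.
Definition m2b (v w : 'I_p) (k h : nat) : nat := m2 v w k h + m2 v w h k.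

Definition inFi (i k : nat) : Prop :=
  exists v w, [/\ inEt v w, vcol v = i, vcol w = i & col v w = k].
Definition inF (k : nat) : Prop := exists i, inFi i k.

Definition cpeo : Prop :=
  forall v u1 u2 : 'I_p, piv v <= piv u1 -> piv v <= piv u2 ->
    adj v u1 -> adj v u2 -> u1 != u2 -> adj u1 u2.

Definition M1 : Prop :=
  forall v w v' w', inEt v w -> inEt v' w' -> col v w = col v' w' ->
    forall k h, m2b v w k h = m2b v' w' k h.

Definition M2 : Prop :=
  forall v w, vcol v = vcol w -> forall k h, inF k -> inF h -> m2 v w k h = m2 w v k h.

Definition CER : Prop := cpeo /\ M1.

End ColoredGraph.

(** Under (M1) every colour k of F joins vertices of one vertex colour.
    Indeed, if c(v,w) = k with c(v) = c(w) = i, the witnesses u = v and u = w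
    give m_{v<->w}(i,k) >= 2.  For any other pair {a,b} of colour k, a vertex
    colour only occurs on the diagonal, so m_{a->b}(i,k) <= [c(a) = i] and
    m_{a->b}(k,i) <= [c(b) = i]; (M1) then forces c(a) = c(b) = i.  Hence each
    J^k with k in F is block diagonal, all middle vertices of a k-h 2-path lie
    in the block of its ends (so the order restriction in m is vacuous), and
    (M2) together with the symmetry m_{v->w}(k,h) = m_{w->v}(h,k) yields the
    commutation of J^k and J^h. *)
From Pilot Require Import Defs.
From mathcomp Require Import all_boot all_order all_algebra.
Import GRing.Theory.
Set Implicit Arguments. Unset Strict Implicit. Unset Printing Implicit Defensive.
Local Open Scope ring_scope.

Section ColoredGraphMatrices.
Variables (p r R : nat) (adj : rel 'I_p) (vcol : 'I_p -> nat)
          (ecol : 'I_p -> 'I_p -> nat) (eta : nat -> nat).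

Local Notation col := (Defs.col adj vcol ecol).
Local Notation inEt := (Defs.inEt adj).
Local Notation J := (Jm adj vcol ecol).
Local Notation piv := (Defs.piv r vcol eta).
Local Notation m2 := (Defs.m2 r adj vcol ecol eta).
Local Notation inF := (Defs.inF adj vcol ecol).
Local Notation BlockDiag := (Defs.BlockDiag vcol).
Local Notation BlockTri := (Defs.BlockTri r vcol eta).

Lemma col_diag (v : 'I_p) : col v v = vcol v.
Proof. by rewrite /Defs.col eqxx. Qed.

Lemma piv_vcol (u v : 'I_p) : vcol u = vcol v -> piv u = piv v.
Proof. by rewrite /Defs.piv => ->. Qed.

Lemma col_gt0_inEt (v w : 'I_p) : (0 < col v w)%N -> inEt v w.
Proof. by rewrite /Defs.inEt /Defs.col; case: eqP => //= _; case: ifP. Qed.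

Lemma Jm_mulE (k h : nat) (v w : 'I_p) :
  (J k *m J h) v w = #|[set u | (col v u == k) && (col u w == h)]|%:Z.
Proof.
rewrite mxE; under eq_bigr do rewrite !mxE -PoszM mulnb.
rewrite -(big_morph Posz PoszD (erefl _)); congr Posz.
rewrite -sum1_card [RHS]big_mkcond /=.
by apply: eq_bigr => u _; rewrite inE; case: (_ && _).
Qed.

Lemma m2_gt0 (v w u : 'I_p) (k h : nat) :
  (piv u <= minn (piv v) (piv w))%N -> col v u = k -> col u w = h ->
  (0 < m2 v w k h)%N.
Proof.
by move=> le_u cvu cuw; apply/card_gt0P; exists u; rewrite inE le_u cvu cuw !eqxx.
Qed.

Lemma BlockTri_BlockDiag (Y : 'M[int]_p) : BlockTri (BlockDiag Y) = BlockDiag Y.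
Proof.
apply/matrixP => v u; rewrite !mxE.
by case: eqP => [/esym/piv_vcol ->|_]; rewrite ?leqnn ?if_same.
Qed.

Lemma BlockDiag_id_eq0 (Y : 'M[int]_p) (v w : 'I_p) :
  BlockDiag Y = Y -> vcol v != vcol w -> Y v w = 0.
Proof. by move=> <- /negbTE vw; rewrite mxE vw. Qed.

Lemma BlockDiag_mul (A B : 'M[int]_p) :
  BlockDiag A = A -> BlockDiag B = B -> BlockDiag (A *m B) = A *m B.
Proof.
move=> dA dB; apply/matrixP => v w; rewrite [LHS]mxE.
case: eqP => // vw; rewrite mxE big1 // => u _.
have [vu|uw] : vcol v != vcol u \/ vcol u != vcol w.
  by case: (vcol v =P vcol u) => [<-|/eqP]; [right; apply/eqP | left].
- by rewrite (BlockDiag_id_eq0 dA vu) mul0r.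
- by rewrite (BlockDiag_id_eq0 dB uw) mulr0.
Qed.

Lemma BlockDiag_Jm_notF (k : nat) : (0 < k)%N -> ~ inF k -> BlockDiag (J k) = 0.
Proof.
move=> k_gt0 nFk; apply/matrixP => v w; rewrite !mxE.
case: eqP => // vw; case: (col v w =P k) => // cvw; case: nFk.
by exists (vcol v), v, w; split; rewrite // col_gt0_inEt // cvw.
Qed.

Hypothesis graph : colored_graph r R adj vcol ecol.

Lemma vcol_range (v : 'I_p) : (0 < vcol v <= r)%N.
Proof. by case: graph. Qed.

Lemma col_sym (v w : 'I_p) : col v w = col w v.
Proof.
case: graph => adjC _ _ ecolC _.
by rewrite /Defs.col eq_sym adjC ecolC; case: eqP => [->|].
Qed.

Lemma inEt_col_gt0 (v w : 'I_p) : inEt v w -> (0 < col v w)%N.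
Proof.
case: graph => _ _ _ _ ecolB.
rewrite /Defs.inEt /Defs.col; case: eqP => [_ _|_ /= vw].
  by case/andP: (vcol_range v).
by rewrite vw; case/andP: (ecolB v w vw) => /(leq_ltn_trans (leq0n r)).
Qed.

Lemma col_le_r_diag (a u : 'I_p) : (0 < col a u <= r)%N -> u = a.
Proof.
case: graph => _ _ _ _ ecolB.
rewrite /Defs.col; case: eqP => [->//|_]; case: ifP => [/ecolB/andP[]|_ //].
by rewrite ltnNge => /negbTE ->; rewrite andbF.
Qed.

Lemma m2_sym (v w : 'I_p) (k h : nat) : m2 v w k h = m2 w v h k.
Proof.
rewrite /Defs.m2 minnC; apply: eq_card => u.
by rewrite !inE (col_sym v u) (col_sym u w) -!andbA [X in _ && X]andbC.
Qed.

Lemma m2_le_vcoll (a b : 'I_p) (i l : nat) :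
  (0 < i <= r)%N -> (m2 a b i l <= (vcol a == i))%N.
Proof.
move=> i_vertex; rewrite /Defs.m2; case: eqP => [_|ai].
  rewrite /= -(cards1 a); apply/subset_leq_card/subsetP => u.
  rewrite !inE => /andP[/andP[_ /eqP cau] _]; apply/eqP/col_le_r_diag.
  by rewrite cau.
rewrite leqn0 cards_eq0; apply/eqP/setP => u; rewrite !inE.
apply/negbTE/andP => -[/andP[_ /eqP cau] _]; apply: ai.
by rewrite -cau (@col_le_r_diag a u) ?col_diag // cau.
Qed.

Lemma m2_le_vcolr (a b : 'I_p) (i l : nat) :
  (0 < i <= r)%N -> (m2 a b l i <= (vcol b == i))%N.
Proof. by rewrite m2_sym; apply: m2_le_vcoll. Qed.

Hypothesis m1 : M1 r adj vcol ecol eta.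

Lemma inF_vcol_eq (k : nat) (a b : 'I_p) : inF k -> col a b = k -> vcol a = vcol b.
Proof.
move=> [i [v [w [vw vi wi cvw]]]] cab.
have ab : inEt a b by rewrite col_gt0_inEt // cab -cvw inEt_col_gt0.
have i_vertex : (0 < i <= r)%N by rewrite -vi vcol_range.
have pvw : piv v = piv w by apply: piv_vcol; rewrite vi wi.
have m2b_eq := m1 vw ab (etrans cvw (esym cab)) i k.
rewrite /Defs.m2b in m2b_eq.
have : (1 + 1 <= (vcol a == i) + (vcol b == i))%N.
  apply: leq_trans (leq_add (m2_le_vcoll a b k i_vertex) (m2_le_vcolr a b k i_vertex)).
  rewrite -m2b_eq; apply: leq_add;
    [apply: (m2_gt0 (u := v)) | apply: (m2_gt0 (u := w))];
    by rewrite ?col_diag ?pvw ?minnn.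
by do 2![case: eqP => [->|]].
Qed.

Lemma BlockDiag_Jm (k : nat) : inF k -> BlockDiag (J k) = J k.
Proof.
move=> Fk; apply/matrixP => v w; rewrite !mxE.
by case: (col v w =P k) => [/(inF_vcol_eq Fk) ->|]; rewrite ?eqxx ?if_same.
Qed.

Lemma Jm_mul_F (k h : nat) (v w : 'I_p) :
  inF k -> inF h -> (J k *m J h) v w = (m2 v w k h)%:Z.
Proof.
move=> Fk Fh; rewrite Jm_mulE /Defs.m2; congr Posz; apply: eq_card => u; rewrite !inE.
case: (col v u =P k) => [/(inF_vcol_eq Fk) vu|]; last by rewrite !andbF.
case: (col u w =P h) => [/(inF_vcol_eq Fh) uw|]; last by rewrite !andbF.
by rewrite -(piv_vcol vu) (piv_vcol (etrans vu uw)) minnn leqnn.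
Qed.

Lemma Jm_F_commute (k h : nat) :
  M2 r adj vcol ecol eta -> inF k -> inF h -> J k *m J h = J h *m J k.
Proof.
move=> m2_swap Fk Fh; apply/matrixP => v w.
have [vw|vw] := eqVneq (vcol v) (vcol w).
  by rewrite !Jm_mul_F // [in RHS]m2_sym (m2_swap v w vw).
by rewrite !(BlockDiag_id_eq0 _ vw) // BlockDiag_mul // BlockDiag_Jm.
Qed.

End ColoredGraphMatrices.

Theorem proposition7p5 (p r R : nat) (adj : rel 'I_p) (vcol : 'I_p -> nat)
    (ecol : 'I_p -> 'I_p -> nat) (eta : nat -> nat) :
  colored_graph r R adj vcol ecol ->
  ordering r eta ->
  CER r adj vcol ecol eta ->
  [/\ (forall k, inF adj vcol ecol k ->
         BlockDiag vcol (Jm adj vcol ecol k) = Jm adj vcol ecol k /\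
         Jm adj vcol ecol k = BlockTri r vcol eta (Jm adj vcol ecol k)),
      (forall k, (1 <= k <= r + R)%N -> ~ inF adj vcol ecol k ->
         BlockDiag vcol (Jm adj vcol ecol k) = 0),
      (forall k h, inF adj vcol ecol k -> inF adj vcol ecol h ->
         forall v w, inEt adj v w ->
           (Jm adj vcol ecol k *m Jm adj vcol ecol h) v w
           = (m2 r adj vcol ecol eta v w k h)%:Z) &
      (M2 r adj vcol ecol eta ->
         forall i, (1 <= i <= r)%N -> forall k h,
           inFi adj vcol ecol i k -> inFi adj vcol ecol i h ->
           Jm adj vcol ecol k *m Jm adj vcol ecol h
           = Jm adj vcol ecol h *m Jm adj vcol ecol k)].
Proof.
move=> graph _ [_ m1]; split.
- move=> k Fk; have diagJ := BlockDiag_Jm graph m1 Fk.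
  by split=> //; rewrite -{2}diagJ BlockTri_BlockDiag diagJ.
- by move=> k /andP[k_gt0 _]; exact: BlockDiag_Jm_notF.
- move=> k h Fk Fh v w _; exact: (Jm_mul_F graph m1 v w Fk Fh).
- move=> hM2 i _ k h Fik Fih.
  exact: (Jm_F_commute graph m1 hM2 (ex_intro _ i Fik) (ex_intro _ i Fih)).
Qed.
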